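(* Let $G_1,G_2$ be finite, noncomplete, nonempty (i.e. having at least one edge), undirected, simple graphs with disjoint vertex sets, and let $n_1=|V(G_1)|$. If $G_1$ is regular, then $\vartheta(G_1\,\mathrm{NS}\,G_2)=n_1+\vartheta(G_2)$ and $\vartheta(G_1\,\mathrm{NNS}\,G_2)=n_1+\vartheta(G_2)$. If moreover $\alpha(G_2)=\vartheta(G_2)$, then $\alpha(G_1\,\mathrm{NS}\,G_2)=n_1+\alpha(G_2)$ and $\alpha(G_1\,\mathrm{NNS}\,G_2)=n_1+\alpha(G_2)$.
   Context: Let $V(G_1)=\{v_1,\dots,v_{n_1}\}$ and let $G_1\vee G_2$ be the disjoint union of $G_1,G_2$ plus all edges between $V(G_1)$ and $V(G_2)$. $G_1\,\mathrm{NS}\,G_2$ is obtained from $G_1\vee G_2$ by adding new vertices $v'_1,\dots,v'_{n_1}$ and joining $v'_i$ to $v_j$ iff $\{v_i,v_j\}\in E(G_1)$. $G_1\,\mathrm{NNS}\,G_2$ is obtained from $G_1\vee G_2$ by adding new vertices $v'_1,\dots,v'_{n_1}$ and joining $v'_i$ to $v_j$, $i\ne j$, iff $\{v_i,v_j\}\notin E(G_1)$. $\alpha$ is the independence number; $\vartheta(G)$ is the Lovász theta function: the maximum of $\mathrm{Tr}(BJ)$ over positive semidefinite $B$ indexed by $V(G)$ with $\mathrm{Tr}B=1$ and $B_{i,j}=0$ for $\{i,j\}\in E(G)$, $J$ the all-ones matrix. *)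

From HB Require Import structures.
From mathcomp Require Import all_boot all_order all_algebra.
From mathcomp Require Import boolp classical_sets reals.
Set Implicit Arguments. Unset Strict Implicit. Unset Printing Implicit Defensive.
Import Order.TTheory GRing.Theory Num.Theory.
Local Open Scope ring_scope.
Local Open Scope classical_set_scope.

Definition simple_graph (V : finType) (e : rel V) : Prop :=
  symmetric e /\ irreflexive e.

Definition noncomplete (V : finType) (e : rel V) : Prop :=
  exists u v : V, u != v /\ ~~ e u v.

Definition has_edge (V : finType) (e : rel V) : Prop :=
  exists u v : V, e u v.

Definition regular (V : finType) (e : rel V) : Prop :=
  exists k : nat, forall v : V, #|[set u | e v u]| = k.

Definition independent (V : finType) (e : rel V) (S : {set V}) : bool :=
  [forall u in S, forall v in S, ~~ e u v].

Definition alpha (V : finType) (e : rel V) : nat :=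
  \max_(S : {set V} | independent e S) #|S|.

Definition psd (R : realType) (V : finType) (B : V -> V -> R) : Prop :=
  (forall i j, B i j = B j i) /\
  (forall x : V -> R, 0 <= \sum_i \sum_j x i * B i j * x j).

(* Lovász theta: max of Tr(BJ) = sum of all entries, over PSD B with
   Tr B = 1 and B_ij = 0 on edges (the max is attained, so we take sup). *)
Definition theta_values (R : realType) (V : finType) (e : rel V) : set R :=
  [set t | exists B : V -> V -> R,
     [/\ psd B, \sum_i B i i = 1, (forall i j, e i j -> B i j = 0)
       & t = \sum_i \sum_j B i j]].

Definition theta (R : realType) (V : finType) (e : rel V) : R :=
  sup (@theta_values R V e).

(* Vertex set of G1 NS G2 / G1 NNS G2: (V1 + V2) + V1, where
   inl (inl v_i) = v_i, inl (inr w) = w in G2, inr v_i = v'_i. *)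
Definition NS_rel (V1 V2 : finType) (e1 : rel V1) (e2 : rel V2)
  (x y : (V1 + V2) + V1) : bool :=
  match x, y with
  | inl (inl a), inl (inl b) => e1 a b
  | inl (inr a), inl (inr b) => e2 a b
  | inl (inl _), inl (inr _) => true
  | inl (inr _), inl (inl _) => true
  | inr i, inl (inl j) => e1 i j
  | inl (inl j), inr i => e1 i j
  | _, _ => false
  end.

Definition NNS_rel (V1 V2 : finType) (e1 : rel V1) (e2 : rel V2)
  (x y : (V1 + V2) + V1) : bool :=
  match x, y with
  | inl (inl a), inl (inl b) => e1 a b
  | inl (inr a), inl (inr b) => e2 a b
  | inl (inl _), inl (inr _) => true
  | inl (inr _), inl (inl _) => true
  | inr i, inl (inl j) => (i != j) && ~~ e1 i j
  | inl (inl j), inr i => (i != j) && ~~ e1 i j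
  | _, _ => false
  end.

From HB Require Import structures.
From mathcomp Require Import all_boot all_order all_algebra.
From mathcomp Require Import boolp classical_sets reals.
From mathcomp Require Import ring lra.
Import Order.TTheory GRing.Theory Num.Theory.
Local Open Scope ring_scope.
Set Implicit Arguments. Unset Strict Implicit. Unset Printing Implicit Defensive.

(* Write X, W, Y for the copies of V(G1), V(G2) and the shadow vertices
   v'_i (and for their indicator vectors), n = |V(G1)|, b(u, v) = u^T B v and
   q(u) = b(u, u).  For a feasible B with trace split tX + tW + tY = 1,
   its value is q(X + Y) + 2 b(Y, W) + q(W), as X and W are completely joined.
   In NS and NNS the X-Y edges form a biregular bipartite graph (of degree k,
   resp. n - 1 - k, for G1 k-regular), so convexity over these edges gives
   q(X + Y) <= n (tX + tY); restricting B to W gives q(W) <= theta(G2) tW,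
   q(Y) <= n tY, and Cauchy-Schwarz bounds 2 b(Y, W) by theta(G2) tY + n tW.
   Hence theta <= n + theta(G2).  Conversely Y and W induce the disjoint union
   of an edgeless graph on n vertices and G2; theta is superadditive on
   disjoint unions and monotone under induced subgraphs.  For alpha, combine
   alpha <= theta with the independent set Y together with one of G2. *)

Lemma ler_mean_of_sqr (R : realFieldType) (b x y : R) :
  0 <= x -> 0 <= y -> b ^+ 2 <= x * y -> 2 * b <= x + y.
Proof.
move=> x0 y0 bxy; have := sqr_ge0 (x - y); nra.
Qed.

Section BiregularSums.
Variables (M : nmodType) (I : finType) (P : rel I) (k : nat).

Lemma sum_edges_fst (F : I -> M) : (forall i, #|[set j | P i j]| = k) ->
  \sum_(p | P p.1 p.2) F p.1 = (\sum_i F i) *+ k.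
Proof.
move=> degP; rewrite -(pair_big_dep xpredT P (fun i _ => F i)) /= -sumrMnl.
apply: eq_bigr => i _; rewrite -(degP i) -sumr_const.
by apply: eq_bigl => j; rewrite inE.
Qed.

Lemma sum_edges_snd (G : I -> M) : (forall j, #|[set i | P i j]| = k) ->
  \sum_(p | P p.1 p.2) G p.2 = (\sum_j G j) *+ k.
Proof.
move=> degP; rewrite -(pair_big_dep xpredT P (fun _ j => G j)) /=.
rewrite (exchange_big_dep xpredT) //= -sumrMnl.
apply: eq_bigr => j _; rewrite -(degP j) -sumr_const.
by apply: eq_bigl => i; rewrite inE.
Qed.
End BiregularSums.

Section QuadraticForm.
Variables (R : realType) (T : finType) (B : T -> T -> R).
Hypothesis B_psd : psd B.
Local Notation vec := {ffun T -> R^o}.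

Definition delta (x : T) : vec := [ffun y => (y == x)%:R].

Definition bil (u v : vec) : R := \sum_i \sum_j (u i : R) * B i j * (v j : R).
Local Notation qf u := (bil u u).

Lemma bilC u v : bil u v = bil v u.
Proof.
rewrite /bil exchange_big; apply: eq_bigr => i _; apply: eq_bigr => j _.
by rewrite B_psd.1; ring.
Qed.

Lemma bil0l v : bil 0 v = 0.
Proof. by rewrite /bil big1 // => i _; rewrite big1 // => j _; rewrite ffunE !mul0r. Qed.

Lemma bilDl u u' v : bil (u + u') v = bil u v + bil u' v.
Proof.
rewrite /bil -big_split; apply: eq_bigr => i _; rewrite -big_split.
by apply: eq_bigr => j _; rewrite !ffunE !mulrDl.
Qed.

Lemma bilZl c u v : bil (c *: u) v = c * bil u v.
Proof.
rewrite /bil mulr_sumr; apply: eq_bigr => i _; rewrite mulr_sumr.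
by apply: eq_bigr => j _; rewrite !ffunE !mulrA.
Qed.

Lemma bil_suml (I : Type) (s : seq I) (P : pred I) (f : I -> vec) v :
  bil (\sum_(i <- s | P i) f i) v = \sum_(i <- s | P i) bil (f i) v.
Proof. exact: (big_morph (bil^~ v) (fun u u' => bilDl u u' v) (bil0l v)). Qed.

Lemma bilDr u v v' : bil u (v + v') = bil u v + bil u v'.
Proof. by rewrite bilC bilDl !(bilC u). Qed.

Lemma bilZr c u v : bil u (c *: v) = c * bil u v.
Proof. by rewrite bilC bilZl bilC. Qed.

Lemma bil_sumr (I : Type) (s : seq I) (P : pred I) (f : I -> vec) u :
  bil u (\sum_(i <- s | P i) f i) = \sum_(i <- s | P i) bil u (f i).
Proof. by rewrite bilC bil_suml; apply: eq_bigr => i _; rewrite bilC. Qed.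

Lemma bil_delta x y : bil (delta x) (delta y) = B x y.
Proof.
rewrite /bil (bigD1 x) //= [X in _ + X]big1 => [|i /negPf nix]; last first.
  by rewrite big1 // => j _; rewrite ffunE nix !mul0r.
rewrite addr0 (bigD1 y) //= [X in _ + X]big1 => [|j /negPf njy]; last first.
  by rewrite !ffunE njy mulr0.
by rewrite !ffunE !eqxx mul1r mulr1 addr0.
Qed.

Lemma bil_sum_delta (I J : finType) (P : pred I) (Q : pred J) g h :
  bil (\sum_(a | P a) delta (g a)) (\sum_(b | Q b) delta (h b)) =
  \sum_(a | P a) \sum_(b | Q b) B (g a) (h b).
Proof.
rewrite bil_suml; apply: eq_bigr => a _; rewrite bil_sumr; apply: eq_bigr => b _.
exact: bil_delta.
Qed.

Lemma bil_ones : bil [ffun=> 1] [ffun=> 1] = \sum_i \sum_j B i j.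
Proof.
by apply: eq_bigr => i _; apply: eq_bigr => j _; rewrite !ffunE mul1r mulr1.
Qed.

Lemma bil_onesr u : bil u [ffun=> 1] = \sum_i u i * \sum_j B i j.
Proof.
by apply: eq_bigr => i _; rewrite mulr_sumr; apply: eq_bigr => j _; rewrite ffunE mulr1.
Qed.

Lemma qf_ge0 u : 0 <= qf u.
Proof. exact: B_psd.2. Qed.

Lemma qfD u v : qf (u + v) = qf u + 2 * bil u v + qf v.
Proof. by rewrite bilDl !bilDr (bilC v u); ring. Qed.

Lemma bil_le_mean u v : 2 * bil u v <= qf u + qf v.
Proof.
have := qf_ge0 (u + (-1) *: v).
by rewrite qfD bilZr bilZl bilZr; lra.
Qed.

Lemma sqr_bil_le u v : bil u v ^+ 2 <= qf u * qf v.
Proof.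
have key w z : 0 < qf z -> bil w z ^+ 2 <= qf w * qf z.
  move=> qz; have := qf_ge0 (qf z *: w + (- bil w z) *: z).
  rewrite qfD !bilZl !bilZr => h.
  by rewrite -subr_ge0 -(pmulr_rge0 _ qz); nra.
have [qv|qv0] := ltP 0 (qf v); first exact: key.
have [qu|qu0] := ltP 0 (qf u); first by rewrite bilC mulrC; apply: key.
have qv : qf v = 0 by apply/le_anti; rewrite qv0 qf_ge0.
have qu : qf u = 0 by apply/le_anti; rewrite qu0 qf_ge0.
have := qf_ge0 (u + (- bil u v) *: v).
by rewrite qfD bilZr !bilZl bilZr qu qv mulr0; nra.
Qed.

Lemma qf_sum_le (I : finType) (P : pred I) (f : I -> vec) :
  qf (\sum_(i | P i) f i) <= #|P|%:R * \sum_(i | P i) qf (f i).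
Proof.
set q := fun i => qf (f i).
have sumP (c : R) : \sum_(i | P i) c = #|P|%:R * c.
  by rewrite sumr_const mulr_natl.
rewrite bil_suml; under eq_bigr do rewrite bil_sumr.
apply: (@le_trans _ _ (\sum_(i | P i) \sum_(j | P j) (q i + q j) / 2)).
  apply: ler_sum => i _; apply: ler_sum => j _.
  by have := bil_le_mean (f i) (f j); rewrite /q; lra.
rewrite (eq_bigr (fun i => (#|P|%:R * q i + \sum_(j | P j) q j) / 2)); last first.
  by move=> i _; rewrite -mulr_suml big_split /= sumP.
by rewrite -mulr_suml big_split /= -mulr_sumr sumP; lra.
Qed.

Lemma psd_gram (I : finType) (w : I -> vec) : psd (fun a b => bil (w a) (w b)).
Proof.
split=> [a b|x]; first exact: bilC.
rewrite (_ : \sum_a _ = bil (\sum_a x a *: w a) (\sum_b x b *: w b)) ?qf_ge0 //.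
rewrite bil_suml; apply: eq_bigr => a _; rewrite bilZl bil_sumr mulr_sumr.
by apply: eq_bigr => b _; rewrite bilZr mulrAC mulrA.
Qed.

Lemma qf_mulrn u k : qf (u *+ k) = k%:R ^+ 2 * qf u.
Proof. by rewrite -scaler_nat bilZl bilZr mulrA. Qed.

Lemma qf_sum_biregular (I : finType) (P : rel I) (k : nat) (f g : I -> vec) :
  (0 < k)%N -> (forall i, #|[set j | P i j]| = k) ->
  (forall j, #|[set i | P i j]| = k) ->
  (forall i j, P i j -> bil (f i) (g j) = 0) ->
  qf (\sum_i f i + \sum_j g j) <= #|I|%:R * \sum_i (qf (f i) + qf (g i)).
Proof.
move=> k_gt0 degl degr Pfg; set v := _ + _.
have edgesE : \sum_(p | P p.1 p.2) (f p.1 + g p.2) = v *+ k.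
  by rewrite big_split /= (sum_edges_fst _ degl) (sum_edges_snd _ degr) mulrnDl.
have card_edges : #|[pred p : I * I | P p.1 p.2]| = (#|I| * k)%N.
  rewrite -sum1_card; under eq_bigl do rewrite inE.
  rewrite (sum_edges_fst (fun _ => 1%N) degl) sum1_card.
  by rewrite -mulr_natr natn.
have qf_edges : \sum_(p | P p.1 p.2) qf (f p.1 + g p.2) =
                (\sum_i (qf (f i) + qf (g i))) *+ k.
  rewrite (eq_bigr (fun p => qf (f p.1) + qf (g p.2))) => [|p Pp]; last first.
    by rewrite qfD Pfg // mulr0 addr0.
  by rewrite big_split /= (sum_edges_fst (fun i => qf (f i)) degl)
    (sum_edges_snd (fun i => qf (g i)) degr) -mulrnDl -big_split.
have := qf_sum_le [pred p : I * I | P p.1 p.2] (fun p => f p.1 + g p.2).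
rewrite edgesE card_edges qf_mulrn qf_edges natrM -[(\sum_i _) *+ k]mulr_natr.
have k2_gt0 : 0 < k%:R ^+ 2 :> R by rewrite exprn_gt0 ?ltr0n.
rewrite [leRHS](_ : _ = k%:R ^+ 2 * (#|I|%:R * \sum_i (qf (f i) + qf (g i)))).
  by rewrite ler_pM2l.
by ring.
Qed.

End QuadraticForm.

Arguments delta {R T} x.

Lemma psd_scale (R : realType) (T : finType) (B : T -> T -> R) (c : R) :
  0 <= c -> psd B -> psd (fun i j => c * B i j).
Proof.
move=> c0 [B_sym B_ge0]; split=> [i j|x]; first by rewrite B_sym.
rewrite (eq_bigr (fun i => c * \sum_j x i * B i j * x j)).
  by rewrite -mulr_sumr mulr_ge0.
by move=> i _; rewrite mulr_sumr; apply: eq_bigr => j _; ring.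
Qed.

Lemma psd_rank1 (R : realType) (T : finType) (w : T -> R) :
  psd (fun i j => w i * w j).
Proof.
split=> [i j|x]; first exact: mulrC.
rewrite (eq_bigr (fun i => (x i * w i) * \sum_j (x j * w j))).
  by rewrite -mulr_suml -expr2 sqr_ge0.
by move=> i _; rewrite mulr_sumr; apply: eq_bigr => j _; ring.
Qed.

Section PsdMatrices.
Variables (R : realType) (T : finType) (B : T -> T -> R).
Hypothesis B_psd : psd B.

Lemma psd_diag_ge0 x : 0 <= B x x.
Proof. by rewrite -bil_delta qf_ge0. Qed.

Lemma psd_comp (I : finType) (g : I -> T) : psd (fun a b => B (g a) (g b)).
Proof.
have := psd_gram B_psd (fun a => delta (g a)).
by under [fun a b => _]eq_fun do under eq_fun do rewrite bil_delta.
Qed.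

Lemma psd_sum_le_trace : \sum_i \sum_j B i j <= #|T|%:R * \sum_i B i i.
Proof.
have := qf_sum_le B_psd predT delta.
rewrite (bil_sum_delta B_psd predT predT id id).
by under [X in _ <= _ * X]eq_bigr do rewrite bil_delta.
Qed.

End PsdMatrices.

Section Theta.
Local Open Scope classical_set_scope.
Variables (R : realType) (V : finType) (e : rel V).
Local Notation values := (@theta_values R V e).

Lemma theta_values_ge0 t : values t -> 0 <= t.
Proof.
move=> [B [B_psd _ _ ->]]; have := B_psd.2 (fun=> 1).
by under eq_bigr do under eq_bigr do rewrite mul1r mulr1.
Qed.

Lemma theta_values_ub : has_ubound values.
Proof.
exists #|V|%:R => t [B [B_psd trB _ ->]].
by have := psd_sum_le_trace B_psd; rewrite trB mulr1.
Qed.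

Lemma le_theta t : values t -> t <= theta R e.
Proof. by move=> vt; apply: (ub_le_sup theta_values_ub). Qed.

Lemma theta_ge0 : 0 <= theta R e.
Proof.
have [[t vt]|no_values] := pselect (values !=set0).
  exact: le_trans (theta_values_ge0 vt) (le_theta vt).
rewrite /theta (_ : values = set0) ?sup0 //.
by apply/seteqP; split=> [t vt|t []]; apply: no_values; exists t.
Qed.

Lemma independentP (S : {set V}) :
  reflect {in S &, forall x y, ~~ e x y} (independent e S).
Proof.
apply: (iffP forall_inP) => [S_ind x y xS yS | S_ind x xS].
  by move/forall_inP: (S_ind x xS); apply.
by apply/forall_inP => y yS; apply: S_ind.
Qed.

Lemma theta_values_independent S :
  independent e S -> (0 < #|S|)%N -> values #|S|%:R.
Proof.
move=> S_ind S_gt0; set c : R := #|S|%:R.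
have c_gt0 : 0 < c by rewrite ltr0n.
have sumS : \sum_i (i \in S)%:R = c.
  rewrite /c -sumr_const [RHS]big_mkcond.
  by apply: eq_bigr => i _; case: (i \in S).
exists (fun i j => c^-1 * ((i \in S)%:R * (j \in S)%:R)); split.
- by apply: psd_scale (psd_rank1 _); rewrite invr_ge0 ltW.
- under eq_bigr do rewrite -natrM mulnb andbb.
  by rewrite -mulr_sumr sumS mulVf ?gt_eqF.
- move=> i j eij; case: (boolP (i \in S)) => iS; last by rewrite mul0r mulr0.
  case: (boolP (j \in S)) => jS; last by rewrite !mulr0.
  by move/independentP/(_ i j iS jS): S_ind; rewrite eij.
- rewrite (eq_bigr (fun i => c^-1 * ((i \in S)%:R * c))) => [|i _]; last first.
    by rewrite -sumS !mulr_sumr.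
  by rewrite -mulr_sumr -mulr_suml sumS mulKf ?gt_eqF.
Qed.

Lemma theta_values1 v : ~~ e v v -> values 1.
Proof.
move=> nevv; have := @theta_values_independent [set v]; rewrite cards1; apply=> //.
by apply/independentP => x y /set1P -> /set1P ->.
Qed.

Lemma alpha_witness : {S | independent e S & alpha e = #|S|}.
Proof.
apply: eq_bigmax_cond; apply/card_gt0P; exists finset.set0.
by rewrite unfold_in; apply/forall_inP => u; rewrite inE.
Qed.

Lemma card_le_alpha S : independent e S -> (#|S| <= alpha e)%N.
Proof. exact: (@leq_bigmax_cond _ (independent e) (fun S => #|S|)). Qed.

Lemma alpha_le_theta : (alpha e)%:R <= theta R e.
Proof.
have [S S_ind ->] := alpha_witness.
have [->|S_gt0] := posnP #|S|; first exact: theta_ge0.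
exact: le_theta (theta_values_independent S_ind S_gt0).
Qed.

Lemma theta_le_restrict (T : finType) (B : T -> T -> R) (g : V -> T) :
  psd B -> (forall a b, e a b -> B (g a) (g b) = 0) ->
  \sum_a \sum_b B (g a) (g b) <= theta R e * \sum_a B (g a) (g a).
Proof.
move=> B_psd Bg0; set tr := \sum_a B (g a) (g a).
have Bg_psd := psd_comp B_psd g.
have [tr_gt0|] := ltP 0 tr; last first.
  move=> tr_le0; have tr0 : tr = 0.
    apply/le_anti; rewrite tr_le0 sumr_ge0 // => a _.
    exact: psd_diag_ge0 B_psd (g a).
  by have := psd_sum_le_trace Bg_psd; rewrite -/tr tr0 !mulr0.
rewrite -ler_pdivrMr // mulrC; apply: le_theta.
exists (fun a b => tr^-1 * B (g a) (g b)); split.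
- by apply: psd_scale Bg_psd; rewrite invr_ge0 ltW.
- by rewrite -mulr_sumr mulVf ?gt_eqF.
- by move=> a b /Bg0 ->; rewrite mulr0.
- by rewrite mulr_sumr; under eq_bigr do rewrite mulr_sumr.
Qed.

End Theta.

Definition sum_rel (U W : finType) (e : rel U) (f : rel W) : rel (U + W) :=
  fun x y => match x, y with
  | inl a, inl b => e a b
  | inr a, inr b => f a b
  | _, _ => false
  end.

Section Embedding.
Variables (R : realType) (U T : finType) (s : rel U) (r : rel T) (f : U -> T).
Hypotheses (f_inj : injective f) (f_rel : forall x y, r (f x) (f y) -> s x y).

Lemma theta_values_embed :
  (@theta_values R U s `<=` @theta_values R T r)%classic.
Proof.
move=> t [B [B_psd trB B0 ->]].
(* The Gram matrix of the indicators of the fibres of f pushes B forward. *)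
pose pull u : {ffun U -> R^o} := \sum_(x | f x == u) delta x.
exists (fun u v => bil B (pull u) (pull v)); split.
- exact: psd_gram.
- rewrite -trB (partition_big f xpredT) //=; apply: eq_bigr => u _.
  rewrite bil_sum_delta //; apply: eq_bigr => x /eqP <-.
  by rewrite (eq_bigl (eq_op^~ x)) ?big_pred1_eq // => y; rewrite inj_eq.
- move=> u v ruv; rewrite bil_sum_delta //.
  rewrite big1 // => x /eqP fx; rewrite big1 // => y /eqP fy.
  by apply/B0/f_rel; rewrite fx fy.
- rewrite -(bil_sum_delta B_psd xpredT xpredT id id) (partition_big f xpredT) //=.
  by rewrite bil_suml; apply: eq_bigr => u _; rewrite bil_sumr.
Qed.

Lemma theta_le_embed :
  (@theta_values R U s !=set0)%classic -> theta R s <= theta R r.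
Proof.
move=> s_values; apply: ge_sup s_values _ => t st.
exact/le_theta/theta_values_embed.
Qed.

Lemma alpha_embed : (alpha s <= alpha r)%N.
Proof.
have [S /independentP S_ind ->] := alpha_witness s.
rewrite -(card_imset _ f_inj); apply: card_le_alpha.
apply/independentP => _ _ /imsetP[x xS ->] /imsetP[y yS ->].
by apply/negP => /f_rel; apply/negP; apply: S_ind.
Qed.

End Embedding.

Section DisjointUnion.
Variables (R : realType) (U W : finType).

(* For feasible Be, Bf of values a, b, (a + b)^-1 * sum_witness is feasible
   for the disjoint union with value a + b; it is positive semidefinite by
   Cauchy-Schwarz: (x^T Be 1)^2 <= a * x^T Be x. *)
Definition sum_witness (a b : R) (Be : U -> U -> R) (Bf : W -> W -> R)
    (x y : U + W) : R :=
  match x, y with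
  | inl i, inl j => a * Be i j
  | inl i, inr q => (\sum_j Be i j) * (\sum_p Bf q p)
  | inr q, inl i => (\sum_p Bf q p) * (\sum_j Be i j)
  | inr p, inr q => b * Bf p q
  end.

Lemma sum_witness_qf a b Be Bf (x : U + W -> R) :
  let xl : {ffun U -> R^o} := [ffun i => x (inl i)] in
  let xr : {ffun W -> R^o} := [ffun q => x (inr q)] in
  \sum_s \sum_t x s * sum_witness a b Be Bf s t * x t =
  a * bil Be xl xl + 2 * (bil Be xl [ffun=> 1] * bil Bf xr [ffun=> 1]) +
  b * bil Bf xr xr.
Proof.
move=> xl xr; under eq_bigr do rewrite big_sumType.
rewrite big_sumType /= !big_split /=.
have cross : \sum_i \sum_q x (inl i) * ((\sum_j Be i j) * (\sum_p Bf q p)) *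
               x (inr q) = bil Be xl [ffun=> 1] * bil Bf xr [ffun=> 1].
  rewrite !bil_onesr big_distrlr; apply: eq_bigr => i _; apply: eq_bigr => q _.
  by rewrite !ffunE /=; ring.
have block (I : finType) (c : R) (B : I -> I -> R) (y : I -> R) :
    \sum_i \sum_j y i * (c * B i j) * y j =
    c * bil B [ffun i => y i] [ffun i => y i].
  rewrite mulr_sumr; apply: eq_bigr => i _; rewrite mulr_sumr.
  by apply: eq_bigr => j _; rewrite !ffunE; ring.
have cross' : \sum_q \sum_i x (inr q) * ((\sum_p Bf q p) * (\sum_j Be i j)) *
                x (inl i) = bil Be xl [ffun=> 1] * bil Bf xr [ffun=> 1].
  rewrite exchange_big -cross /=.
  by apply: eq_bigr => i _; apply: eq_bigr => q _; ring.
by rewrite block cross cross' block; ring.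
Qed.

Lemma theta_values_sum_rel (e : rel U) (f : rel W) a b :
  @theta_values R U e a -> @theta_values R W f b ->
  theta_values (sum_rel e f) (a + b).
Proof.
move=> ea fb; have b0 := theta_values_ge0 fb.
have := theta_values_ge0 ea; rewrite le_eqVlt => /predU1P[a0|a_gt0].
  by rewrite -a0 add0r; apply: (theta_values_embed (@inr_inj U W)) fb.
case: ea fb => [Be [Be_psd trBe Be0 aE]] [Bf [Bf_psd trBf Bf0 bE]].
have ab_gt0 : 0 < a + b by rewrite ltr_wpDr.
exists (fun s t => (a + b)^-1 * sum_witness a b Be Bf s t); split.
- apply: psd_scale; first by rewrite invr_ge0 ltW.
  split=> [[i|p] [j|q] /=|x]; first by rewrite Be_psd.1.
  + exact: mulrC.
  + exact: mulrC.
  + by rewrite Bf_psd.1.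
  rewrite sum_witness_qf /=.
  set xl := [ffun i => x (inl i)]; set xr := [ffun q => x (inr q)].
  set C := bil Be xl [ffun=> 1]; set D := bil Bf xr [ffun=> 1].
  have CSe := sqr_bil_le Be_psd xl [ffun=> 1]; rewrite bil_ones -aE in CSe.
  have CSf := sqr_bil_le Bf_psd xr [ffun=> 1]; rewrite bil_ones -bE in CSf.
  have P0 := qf_ge0 Be_psd xl; have Q0 := qf_ge0 Bf_psd xr.
  have : 2 * - (C * D) <= a * bil Be xl xl + b * bil Bf xr xr.
    apply: ler_mean_of_sqr; [exact: mulr_ge0 (ltW a_gt0) P0|exact: mulr_ge0|].
    rewrite sqrrN exprMn (mulrC a) (mulrC b).
    exact: ler_pM (sqr_ge0 _) (sqr_ge0 _) CSe CSf.
  lra.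
- rewrite -mulr_sumr big_sumType /= -(mulr_sumr _ _ (fun i => Be i i)).
  rewrite -(mulr_sumr _ _ (fun q => Bf q q)) trBe trBf !mulr1.
  by rewrite mulVf ?gt_eqF.
- by case=> [i|p] [j|q] //= => [/Be0|/Bf0] ->; rewrite !mulr0.
- rewrite (eq_bigr (fun s => (a + b)^-1 *
    \sum_t 1 * sum_witness a b Be Bf s t * 1)) => [|s _]; last first.
    by rewrite mulr_sumr; apply: eq_bigr => t _; rewrite mul1r mulr1.
  rewrite -mulr_sumr (sum_witness_qf a b Be Bf (fun=> 1)) /= !bil_ones -aE -bE.
  by field; rewrite gt_eqF.
Qed.

Lemma theta_sum_rel_ge (e : rel U) (f : rel W) :
  (@theta_values R U e !=set0)%classic -> (@theta_values R W f !=set0)%classic ->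
  theta R e + theta R f <= theta R (sum_rel e f).
Proof.
move=> e_values f_values; rewrite -lerBrDr; apply: ge_sup e_values _ => a ea.
rewrite lerBrDr addrC -lerBrDr; apply: ge_sup f_values _ => b fb.
by rewrite lerBrDr addrC; apply/le_theta/theta_values_sum_rel.
Qed.

Lemma alpha_sum_rel (e : rel U) (f : rel W) :
  (alpha e + alpha f <= alpha (sum_rel e f))%N.
Proof.
have [S1 /independentP S1_ind ->] := alpha_witness e.
have [S2 /independentP S2_ind ->] := alpha_witness f.
pose S : {set U + W} :=
  [set x | match x with inl a => a \in S1 | inr b => b \in S2 end].
have -> : (#|S1| + #|S2| = #|S|)%N.
  rewrite -!sum1_card big_sumType.
  by congr (_ + _); apply: eq_bigl => ?; rewrite inE.
apply/card_le_alpha/independentP => [[a|b] [a'|b']] //=; rewrite !inE.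
- exact: S1_ind.
- exact: S2_ind.
Qed.

End DisjointUnion.

Definition empty_rel (T : Type) : rel T := fun _ _ => false.

Section SplitGraph.
Variables (R : realType) (V1 V2 : finType) (e2 : rel V2).
Hypothesis V1_gt0 : (0 < #|V1|)%N.
Hypothesis V2_gt0 : (0 < #|V2|)%N.
Hypothesis e2_irr : irreflexive e2.
Variables (r : rel ((V1 + V2) + V1)) (k : nat).

Definition shadow_G2 (x : V1 + V2) : (V1 + V2) + V1 :=
  match x with inl i => inr i | inr a => inl (inr a) end.

Hypothesis r_XW : forall i a, r (inl (inl i)) (inl (inr a)).
Hypothesis r_shadow_G2 : forall x y,
  r (shadow_G2 x) (shadow_G2 y) = sum_rel (@empty_rel V1) e2 x y.
Hypothesis k_gt0 : (0 < k)%N.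
Hypothesis deg_X : forall i, #|[set j | r (inl (inl i)) (inr j)]| = k.
Hypothesis deg_Y : forall j, #|[set i | r (inl (inl i)) (inr j)]| = k.

Local Notation n := (#|V1|%:R : R).

Lemma shadow_G2_inj : injective shadow_G2.
Proof. by move=> [i|a] [j|b] //= [->]. Qed.

Lemma theta_values_split_le t : theta_values r t -> t <= n + theta R e2.
Proof.
move=> [B [B_psd trB B0 ->]]; set m := theta R e2.
pose X : {ffun (V1 + V2) + V1 -> R^o} := \sum_i delta (inl (inl i)).
pose W : {ffun (V1 + V2) + V1 -> R^o} := \sum_a delta (inl (inr a)).
pose Y : {ffun (V1 + V2) + V1 -> R^o} := \sum_i delta (inr i).
set tX := \sum_i B (inl (inl i)) (inl (inl i)).
set tW := \sum_a B (inl (inr a)) (inl (inr a)).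
set tY := \sum_i B (inr i) (inr i).
have trE : tX + tW + tY = 1 by rewrite -trB !big_sumType.
have valE :
    \sum_x \sum_y B x y = bil B (X + Y) (X + Y) + 2 * bil B Y W + bil B W W.
  rewrite -(bil_sum_delta B_psd xpredT xpredT id id) !big_sumType /= -/X -/W -/Y.
  rewrite addrAC (qfD B_psd (X + Y)) (bilDl B X Y W).
  rewrite [bil B X W](bil_sum_delta B_psd xpredT xpredT) big1 ?add0r //.
  by move=> i _; rewrite big1 // => a _; apply/B0/r_XW.
have hXY : bil B (X + Y) (X + Y) <= n * (tX + tY).
  rewrite -[tX + tY]big_split /=.
  under [Z in _ <= _ * Z]eq_bigr do rewrite -!(bil_delta B).
  apply: (qf_sum_biregular B_psd k_gt0 deg_X deg_Y) => i j rij.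
  by rewrite bil_delta; apply: B0.
have hW : bil B W W <= m * tW.
  rewrite (bil_sum_delta B_psd xpredT xpredT).
  apply: theta_le_restrict => // a b e2ab.
  by apply: B0; rewrite (r_shadow_G2 (inr a) (inr b)).
have hY : bil B Y Y <= n * tY.
  rewrite (bil_sum_delta B_psd xpredT xpredT).
  exact: psd_sum_le_trace (psd_comp B_psd _).
have diag0 := psd_diag_ge0 B_psd.
have tX0 : 0 <= tX by apply: sumr_ge0.
have tY0 : 0 <= tY by apply: sumr_ge0.
have tW0 : 0 <= tW by apply: sumr_ge0.
have m0 : 0 <= m := theta_ge0 R e2.
have hYW : 2 * bil B Y W <= m * tY + n * tW.
  apply: ler_mean_of_sqr; rewrite ?mulr_ge0 //.
  apply: le_trans (sqr_bil_le B_psd Y W) _.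
  rewrite [X in _ <= X](_ : _ = (n * tY) * (m * tW)); last by ring.
  by apply: ler_pM; rewrite ?qf_ge0.
rewrite valE; nra.
Qed.

Lemma theta_values_empty_rel : @theta_values R V1 (@empty_rel V1) n.
Proof.
rewrite -cardsT; apply: theta_values_independent; last by rewrite cardsT.
exact/independentP.
Qed.

Lemma theta_split_graph : theta R r = n + theta R e2.
Proof.
have [v _] := card_gt0P V2_gt0.
have e2_values : (@theta_values R V2 e2 !=set0)%classic.
  by exists 1; exact: theta_values1 (negbT (e2_irr v)).
have sum_values :
    (@theta_values R _ (sum_rel (@empty_rel V1) e2) !=set0)%classic.
  case: e2_values => t e2t; exists (n + t).
  exact: theta_values_sum_rel theta_values_empty_rel e2t.
have r_embed x y : r (shadow_G2 x) (shadow_G2 y) -> sum_rel (@empty_rel V1) e2 x y.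
  by rewrite r_shadow_G2.
apply/le_anti/andP; split.
  apply: ge_sup => [|t]; last exact: theta_values_split_le.
  case: sum_values => t st; exists t.
  exact: theta_values_embed shadow_G2_inj r_embed _ st.
apply: le_trans (theta_le_embed shadow_G2_inj r_embed sum_values).
apply: le_trans (theta_sum_rel_ge _ e2_values); last first.
  by exists n; exact: theta_values_empty_rel.
by rewrite lerD2r; apply: le_theta theta_values_empty_rel.
Qed.

Lemma theta_alpha_split_graph :
  theta R r = n + theta R e2 /\
  ((alpha e2)%:R = theta R e2 -> alpha r = (#|V1| + alpha e2)%N).
Proof.
split=> [|alpha_theta]; first exact: theta_split_graph.
apply/eqP; rewrite eqn_leq; apply/andP; split.
  by rewrite -(ler_nat R) natrD alpha_theta -theta_split_graph alpha_le_theta.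
have alpha_empty : (#|V1| <= alpha (@empty_rel V1))%N.
  by rewrite -cardsT card_le_alpha //; apply/independentP.
apply: leq_trans (leq_add alpha_empty (leqnn _)) _.
apply: leq_trans (alpha_sum_rel _ _) (alpha_embed shadow_G2_inj _).
by move=> x y; rewrite r_shadow_G2.
Qed.

End SplitGraph.

Lemma regular_card (V : finType) (e : rel V) :
  regular e -> exists k, forall v, #|[set u | e v u]| = k.
Proof.
move=> [k e_reg]; exists k => v; rewrite -(e_reg v).
by apply: eq_card => w; rewrite inE; apply/idP/idP; rewrite in_setE.
Qed.

Lemma card_non_neighbours (V : finType) (e : rel V) k v :
  irreflexive e -> #|[set u | e v u]| = k ->
  #|[set u | (u != v) && ~~ e v u]| = (#|V| - k.+1)%N.
Proof.
move=> e_irr deg_v.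
have -> : [set u | (u != v) && ~~ e v u] = ~: (v |: [set u | e v u]).
  by apply/setP => u; rewrite !inE negb_or.
have := cardsC (v |: [set u | e v u]).
by rewrite cardsU1 inE e_irr deg_v => <-; rewrite addKn.
Qed.

Section NSGraphs.
Variables (V1 V2 : finType) (e1 : rel V1) (e2 : rel V2) (k : nat).
Hypotheses (e1_sym : symmetric e1) (e1_irr : irreflexive e1).
Hypothesis e1_reg : forall v, #|[set u | e1 v u]| = k.

Lemma NS_shadow_G2 x y :
  NS_rel e1 e2 (shadow_G2 x) (shadow_G2 y) = sum_rel (@empty_rel V1) e2 x y.
Proof. by case: x; case: y. Qed.

Lemma NNS_shadow_G2 x y :
  NNS_rel e1 e2 (shadow_G2 x) (shadow_G2 y) = sum_rel (@empty_rel V1) e2 x y.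
Proof. by case: x; case: y. Qed.

Lemma NS_degl i : #|[set j | NS_rel e1 e2 (inl (inl i)) (inr j)]| = k.
Proof. by rewrite -(e1_reg i); apply: eq_card => j; rewrite !inE /= e1_sym. Qed.

Lemma NS_degr j : #|[set i | NS_rel e1 e2 (inl (inl i)) (inr j)]| = k.
Proof. by rewrite -(e1_reg j); apply: eq_card => i; rewrite !inE. Qed.

Lemma NNS_degl i :
  #|[set j | NNS_rel e1 e2 (inl (inl i)) (inr j)]| = (#|V1| - k.+1)%N.
Proof.
rewrite -(card_non_neighbours e1_irr (e1_reg i)).
by apply: eq_card => j; rewrite !inE /= e1_sym.
Qed.

Lemma NNS_degr j :
  #|[set i | NNS_rel e1 e2 (inl (inl i)) (inr j)]| = (#|V1| - k.+1)%N.
Proof. by rewrite -(NNS_degl j); apply: eq_card => i; rewrite !inE /= eq_sym e1_sym. Qed.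

End NSGraphs.

Theorem mainTheorem6 (R : realType) (V1 V2 : finType)
  (e1 : rel V1) (e2 : rel V2) :
  simple_graph e1 -> simple_graph e2 ->
  noncomplete e1 -> noncomplete e2 ->
  has_edge e1 -> has_edge e2 ->
  regular e1 ->
  [/\ theta R (NS_rel e1 e2) = #|V1|%:R + theta R e2,
      theta R (NNS_rel e1 e2) = #|V1|%:R + theta R e2
    & ((alpha e2)%:R = theta R e2 ->
       alpha (NS_rel e1 e2) = (#|V1| + alpha e2)%N /\
       alpha (NNS_rel e1 e2) = (#|V1| + alpha e2)%N)].
Proof.
move=> [e1_sym e1_irr] [_ e2_irr] [u [v [uv nuv]]] _ [a [b ab]] [c [d _]].
move=> /regular_card[k e1_reg].
have V1_gt0 : (0 < #|V1|)%N by apply/card_gt0P; exists a.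
have V2_gt0 : (0 < #|V2|)%N by apply/card_gt0P; exists c.
have k_gt0 : (0 < k)%N by rewrite -(e1_reg a); apply/card_gt0P; exists b; rewrite inE.
have k'_gt0 : (0 < #|V1| - k.+1)%N.
  rewrite -(NNS_degl e2 e1_sym e1_irr e1_reg u); apply/card_gt0P; exists v.
  by rewrite inE /= eq_sym uv e1_sym.
have [theta_NS alpha_NS] := theta_alpha_split_graph R V1_gt0 V2_gt0 e2_irr
  (fun _ _ => isT) (NS_shadow_G2 e1 e2) k_gt0
  (NS_degl e2 e1_sym e1_reg) (NS_degr e2 e1_reg).
have [theta_NNS alpha_NNS] := theta_alpha_split_graph R V1_gt0 V2_gt0 e2_irr
  (fun _ _ => isT) (NNS_shadow_G2 e1 e2) k'_gt0
  (NNS_degl e2 e1_sym e1_irr e1_reg) (NNS_degr e2 e1_sym e1_irr e1_reg).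
by split=> // alpha_theta; rewrite alpha_NS ?alpha_NNS.
Qed.
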